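(* Let $d_1,d_2\ge 2$ and let $\rho$ be a density matrix on $\mathbb{C}^{d_1}\otimes\mathbb{C}^{d_2}$. Let $\mathcal{P}=\{P_j\}_{j=1}^{d_1^2}$ be a general SIC-POVM on $\mathbb{C}^{d_1}$ with parameter $a_1$ and $\mathcal{Q}=\{Q_k\}_{k=1}^{d_2^2}$ a general SIC-POVM on $\mathbb{C}^{d_2}$ with parameter $a_2$. Let $d=\min\{d_1^2,d_2^2\}$ and define $$J(\rho)=\max_{\sigma,\tau}\sum_{j=1}^{d}\mathrm{Tr}\big[(P_{\sigma(j)}\otimes Q_{\tau(j)})\rho\big],$$ where the maximum runs over all injective maps $\sigma:\{1,\dots,d\}\to\{1,\dots,d_1^2\}$ and $\tau:\{1,\dots,d\}\to\{1,\dots,d_2^2\}$. If $\rho$ is separable, then $$J(\rho)\le \sqrt{\frac{a_1d_1^2+1}{d_1(d_1+1)}}\,\sqrt{\frac{a_2d_2^2+1}{d_2(d_2+1)}}.$$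
   Context: A general SIC-POVM on $\mathbb{C}^{n}$ with parameter $a$ is a set of $n^2$ positive semidefinite operators $\{P_\alpha\}_{\alpha=1}^{n^2}$ on $\mathbb{C}^{n}$ such that $\sum_{\alpha=1}^{n^2}P_\alpha=I$, $\mathrm{Tr}(P_\alpha^2)=a$ for all $\alpha$, and $\mathrm{Tr}(P_\alpha P_\beta)=\frac{1-na}{n(n^2-1)}$ for all $\alpha\neq\beta$; here $\frac{1}{n^3}<a\le\frac{1}{n^2}$. A density matrix on $\mathbb{C}^{d_1}\otimes\mathbb{C}^{d_2}$ is separable if it is a convex combination of product states $\rho_A\otimes\rho_B$. *)

From HB Require Import structures.
From mathcomp Require Import all_boot all_order all_algebra.
From mathcomp Require Import algC.
Set Implicit Arguments. Unset Strict Implicit. Unset Printing Implicit Defensive.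
Import Order.TTheory GRing.Theory Num.Theory.
Local Open Scope ring_scope.

Definition adjmx m n (A : 'M[algC]_(m, n)) : 'M[algC]_(n, m) := map_mx (fun x : algC => x^*) A^T.

Definition psd n (A : 'M[algC]_n) : Prop :=
  adjmx A = A /\ forall v : 'cV[algC]_n, 0 <= (adjmx v *m A *m v) 0 0.

Definition density n (A : 'M[algC]_n) : Prop := psd A /\ \tr A = 1.

(* Kronecker (tensor) product A (x) B, with index (i,k) of C^m (x) C^n
   encoded as mxvec_index i k : 'I_(m*n). *)
Definition kron m n (A : 'M[algC]_m) (B : 'M[algC]_n) : 'M[algC]_(m * n) :=
  \sum_(i < m) \sum_(j < m) \sum_(k < n) \sum_(l < n)
     (A i j * B k l) *: delta_mx (mxvec_index i k) (mxvec_index j l).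

Definition separable d1 d2 (rho : 'M[algC]_(d1 * d2)) : Prop :=
  exists (N : nat) (p : 'I_N -> algC) (A : 'I_N -> 'M[algC]_d1)
         (B : 'I_N -> 'M[algC]_d2),
    (forall i, 0 <= p i) /\ \sum_(i < N) p i = 1 /\
    (forall i, density (A i)) /\ (forall i, density (B i)) /\
    rho = \sum_(i < N) p i *: kron (A i) (B i).

Definition gen_SIC_POVM n (a : algC) (P : 'I_(n ^ 2) -> 'M[algC]_n) : Prop :=
  (n%:R ^+ 3)^-1 < a /\ a <= (n%:R ^+ 2)^-1 /\
      (forall al, psd (P al)) /\
      \sum_(al < n ^ 2) P al = 1%:M /\
      (forall al, \tr (P al *m P al) = a) /\
      (forall al be, al != be ->
         \tr (P al *m P be) = (1 - n%:R * a) / (n%:R * (n%:R ^+ 2 - 1))).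

From HB Require Import structures.
From mathcomp Require Import all_boot all_order all_algebra algC ring.
Import Order.TTheory GRing.Theory Num.Theory.
Set Implicit Arguments. Unset Strict Implicit. Unset Printing Implicit Defensive.
Local Open Scope ring_scope.

(* For a state A write p_al = tr(P_al A).  The Gram matrix of a general
   SIC-POVM is tr(P_al P_be) = c + [al = be](a - c) with a > c, so Bessel's
   inequality applied to the traceless part X = A - I/n gives
   sum_al tr(P_al X)^2 <= (a - c) tr(X^2); together with tr P_al = 1/n and
   tr(A^2) <= 1 this bounds sum_al p_al^2 by (a n^2 + 1)/(n(n + 1)).  On a
   product state tr((P (x) Q)(A (x) B)) = tr(PA) tr(QB), so Cauchy-Schwarz
   along the injectively chosen indices bounds the sum by the product of the
   two square roots, and a separable state is a convex combination of
   product states. *)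

Lemma sum_delta (R : pzSemiRingType) (I : finType) (i0 : I) (F : I -> R) :
  \sum_i (i0 == i)%:R * F i = F i0.
Proof.
rewrite (bigD1 i0) //= eqxx mul1r big1 ?addr0 // => i.
by rewrite eq_sym => /negbTE->; rewrite mul0r.
Qed.

Lemma ler_sum_inj (R : numDomainType) (I J : finType) (f : I -> J) (F : J -> R) :
  injective f -> (forall j, 0 <= F j) -> \sum_i F (f i) <= \sum_j F j.
Proof.
move=> f_inj F_ge0; rewrite -(big_imset _ (in2W f_inj)) /=.
by rewrite [leRHS](bigID (mem (f @: predT))) /= lerDl sumr_ge0.
Qed.

Lemma real_quadratic_ge0 (R : numFieldType) (al be ga : R) :
  0 <= al -> 0 <= be -> 0 <= ga ->
  (forall t, t \is Num.real -> 0 <= t ^+ 2 * al - 2 * t * be + be * ga) ->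
  be <= al * ga.
Proof.
move=> al_ge0 be_ge0 ga_ge0 q_ge0.
have [al0 | al_neq0] := eqVneq al 0.
  have := q_ge0 (ga + 1) (rpredD (ger0_real ga_ge0) (rpred1 _)).
  have -> : (ga + 1) ^+ 2 * al - 2 * (ga + 1) * be + be * ga = - (be * (ga + 2)).
    by rewrite al0; ring.
  rewrite oppr_ge0 pmulr_lle0 ?ltr_wpDl // => be_le0.
  by rewrite al0 mul0r.
have al_gt0 : 0 < al by rewrite lt0r al_neq0.
have := q_ge0 (be / al) (ger0_real (divr_ge0 be_ge0 (ltW al_gt0))).
have -> : (be / al) ^+ 2 * al - 2 * (be / al) * be + be * ga = be / al * (al * ga - be).
  by field; rewrite gt_eqF.
have [-> _ | be_neq0] := eqVneq be 0; first by rewrite mulr_ge0 // ltW.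
by rewrite pmulr_rge0 ?subr_ge0 // divr_gt0 // lt0r be_neq0.
Qed.

Lemma sum_mul_le_sqrtC (C : numClosedFieldType) (J : finType) (x y : J -> C)
    (b1 b2 : C) :
  (forall j, x j \is Num.real) -> (forall j, y j \is Num.real) ->
  0 < b1 -> 0 < b2 ->
  \sum_j x j ^+ 2 <= b1 -> \sum_j y j ^+ 2 <= b2 ->
  \sum_j x j * y j <= sqrtC b1 * sqrtC b2.
Proof.
move=> x_real y_real b1_gt0 b2_gt0 sx sy.
set s1 := sqrtC b1; set s2 := sqrtC b2.
have s1_gt0 : 0 < s1 by rewrite sqrtC_gt0.
have s2_gt0 : 0 < s2 by rewrite sqrtC_gt0.
have s_gt0 : 0 < 2 * (s1 * s2) by rewrite !mulr_gt0.
rewrite -(ler_pM2l s_gt0).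
apply: le_trans (_ : \sum_j (s2 ^+ 2 * x j ^+ 2 + s1 ^+ 2 * y j ^+ 2) <= _).
  rewrite mulr_sumr; apply: ler_sum => j _; rewrite -subr_ge0.
  have -> : s2 ^+ 2 * x j ^+ 2 + s1 ^+ 2 * y j ^+ 2 - 2 * (s1 * s2) * (x j * y j)
      = (s2 * x j - s1 * y j) ^+ 2 by ring.
  by rewrite -realEsqr rpredB ?rpredM ?x_real ?y_real ?gtr0_real.
rewrite big_split /= -!mulr_sumr.
apply: le_trans (_ : s2 ^+ 2 * b1 + s1 ^+ 2 * b2 <= _).
  by apply: lerD; apply: ler_wpM2l; rewrite // exprn_ge0 // ltW.
have -> : 2 * (s1 * s2) * (s1 * s2) = 2 * (s1 ^+ 2 * s2 ^+ 2) by ring.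
by rewrite /s1 /s2 !sqrtCK [b2 * b1]mulrC mulr_natl mulr2n.
Qed.

Lemma mxtrace_mulmxE (R : pzSemiRingType) m n (X : 'M[R]_(m, n)) (Y : 'M_(n, m)) :
  \tr (X *m Y) = \sum_i \sum_j X i j * Y j i.
Proof. by apply: eq_bigr => i _; rewrite mxE. Qed.

Definition hermitian_mx n (A : 'M[algC]_n) := forall i j, A i j = (A j i)^*.

Section Hermitian.
Variable n : nat.
Implicit Types (A X Y : 'M[algC]_n).

Lemma psd_hermitian_mx A : psd A -> hermitian_mx A.
Proof. by case=> A_herm _ i j; rewrite -{1}A_herm !mxE. Qed.

Lemma hermitian_mxB A B : hermitian_mx A -> hermitian_mx B -> hermitian_mx (A - B).
Proof. by move=> hA hB i j; rewrite !mxE rmorphB /= -hA -hB. Qed.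

Lemma hermitian_mxZ c A : c \is Num.real -> hermitian_mx A -> hermitian_mx (c *: A).
Proof. by move=> /CrealP c_real hA i j; rewrite !mxE rmorphM /= c_real -hA. Qed.

Lemma hermitian_mx_scalar c : c \is Num.real -> hermitian_mx (c%:M : 'M_n).
Proof. by move=> /CrealP c_real i j; rewrite !mxE rmorphMn /= c_real eq_sym. Qed.

Lemma hermitian_mx_sum I (r : seq I) (F : I -> 'M[algC]_n) :
  (forall i, hermitian_mx (F i)) -> hermitian_mx (\sum_(i <- r) F i).
Proof.
by move=> hF i j; rewrite !summxE rmorph_sum; apply: eq_bigr => k _; apply: hF.
Qed.

Lemma mxtrace_mul_hermitian_real X Y :
  hermitian_mx X -> hermitian_mx Y -> \tr (X *m Y) \is Num.real.
Proof.
move=> hX hY; apply/CrealP; rewrite !mxtrace_mulmxE rmorph_sum exchange_big /=.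
apply: eq_bigr => i _; rewrite rmorph_sum; apply: eq_bigr => j _.
by rewrite rmorphM /= -hX -hY mulrC.
Qed.

Lemma mxtrace_sqr_hermitian_ge0 X : hermitian_mx X -> 0 <= \tr (X *m X).
Proof.
move=> hX; rewrite mxtrace_mulmxE; apply: sumr_ge0 => i _; apply: sumr_ge0 => j _.
by rewrite [X j i]hX mul_conjC_ge0.
Qed.

End Hermitian.

Section PositiveSemidefinite.
Variable n : nat.
Implicit Types (A : 'M[algC]_n) (v : 'cV[algC]_n).

Lemma quad_formE A v :
  (adjmx v *m A *m v) 0 0 = \sum_k (v k 0)^* * \sum_l A k l * v l 0.
Proof. by rewrite -mulmxA mxE; apply: eq_bigr => k _; rewrite !mxE. Qed.

Definition vec2 (i j : 'I_n) (t s : algC) : 'cV[algC]_n :=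
  \col_k (t * (i == k)%:R + s * (j == k)%:R).

Lemma sum_vec2 (i j : 'I_n) t s (F : 'I_n -> algC) :
  \sum_k (t * (i == k)%:R + s * (j == k)%:R) * F k = t * F i + s * F j.
Proof.
under eq_bigr do rewrite mulrDl -!mulrA.
by rewrite big_split -!big_distrr /= !sum_delta.
Qed.

Lemma quad_form_vec2 A i j t s :
  (adjmx (vec2 i j t s) *m A *m vec2 i j t s) 0 0 =
  t^* * (t * A i i + s * A i j) + s^* * (t * A j i + s * A j j).
Proof.
rewrite quad_formE; under eq_bigr => k _.
  rewrite mxE rmorphD !rmorphM /= !conjC_nat.
  under eq_bigr do rewrite mxE mulrC.
  rewrite sum_vec2; over.
by rewrite sum_vec2.
Qed.

Lemma psd_diag_ge0 A i : psd A -> 0 <= A i i.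
Proof.
case=> _ A_psd; have := A_psd (vec2 i i 1 0); rewrite quad_form_vec2.
by rewrite rmorph1 rmorph0 !(mul1r, mul0r, mulr0, mulr1, addr0).
Qed.

Lemma psd_minor_ge0 A i j : psd A -> A i j * (A i j)^* <= A i i * A j j.
Proof.
move=> A_psd; have hA := psd_hermitian_mx A_psd.
apply: real_quadratic_ge0; rewrite ?psd_diag_ge0 ?mul_conjC_ge0 // => t /CrealP t_real.
case: A_psd => _ /(_ (vec2 i j t (- A j i))); rewrite quad_form_vec2.
by rewrite t_real rmorphN /= [A j i]hA conjCK; congr (0 <= _); ring.
Qed.

Lemma mxtrace_sqr_psd_le A : psd A -> \tr (A *m A) <= \tr A ^+ 2.
Proof.
move=> A_psd; rewrite mxtrace_mulmxE expr2 /mxtrace mulr_suml.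
apply: ler_sum => i _; rewrite mulr_sumr; apply: ler_sum => j _.
by rewrite [A j i](psd_hermitian_mx A_psd) psd_minor_ge0.
Qed.

Lemma density_purity_le1 A : density A -> \tr (A *m A) <= 1.
Proof. by case=> A_psd trA; rewrite -(expr1n _ 2) -trA mxtrace_sqr_psd_le. Qed.

End PositiveSemidefinite.

Lemma mxvec_index_eq m n (i i' : 'I_m) (k k' : 'I_n) :
  (mxvec_index i k == mxvec_index i' k') = (i == i') && (k == k').
Proof.
by apply/eqP/andP => [/cast_ord_inj/enum_rank_inj [-> ->] | [/eqP-> /eqP->]].
Qed.

Lemma sum_mxvec (V : nmodType) m n (F : 'I_(m * n) -> V) :
  \sum_x F x = \sum_i \sum_k F (mxvec_index i k).
Proof.
by rewrite (reindex _ (curry_mxvec_bij _ _)) pair_bigA; apply: eq_bigr => -[].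
Qed.

Section Kronecker.
Variables m n : nat.
Implicit Types (A P : 'M[algC]_m) (B Q : 'M[algC]_n).

Lemma kronE A B i j k l :
  kron A B (mxvec_index i k) (mxvec_index j l) = A i j * B k l.
Proof.
transitivity (\sum_i' (i == i')%:R * \sum_j' (j == j')%:R *
   \sum_k' (k == k')%:R * \sum_l' (l == l')%:R * (A i' j' * B k' l')).
  rewrite summxE; apply: eq_bigr => i' _; rewrite summxE big_distrr.
  apply: eq_bigr => j' _; rewrite summxE !big_distrr; apply: eq_bigr => k' _.
  rewrite summxE !big_distrr; apply: eq_bigr => l' _ /=.
  rewrite !mxE !mxvec_index_eq -!mulnb !natrM; ring.
by rewrite sum_delta sum_delta sum_delta sum_delta.
Qed.

Lemma kron_mulmx P Q A B : kron P Q *m kron A B = kron (P *m A) (Q *m B).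
Proof.
apply/matrixP => x y; case/mxvec_indexP: x => i k; case/mxvec_indexP: y => j l.
rewrite mxE kronE sum_mxvec !mxE big_distrl; apply: eq_bigr => i' _.
by rewrite big_distrr; apply: eq_bigr => k' _; rewrite !kronE mulrACA.
Qed.

Lemma mxtrace_kron A B : \tr (kron A B) = \tr A * \tr B.
Proof.
rewrite /mxtrace sum_mxvec big_distrl; apply: eq_bigr => i _.
by rewrite big_distrr; apply: eq_bigr => k _; rewrite kronE.
Qed.

End Kronecker.

Lemma equiangular_bessel n (I : finType) (P : I -> 'M[algC]_n) (c k : algC)
    (X : 'M[algC]_n) :
  (forall al, hermitian_mx (P al)) -> hermitian_mx X -> 0 < k ->
  (forall al be, \tr (P al *m P be) = c + (al == be)%:R * k) ->
  \sum_al \tr (P al *m X) = 0 ->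
  \sum_al \tr (P al *m X) ^+ 2 <= k * \tr (X *m X).
Proof.
move=> hP hX k_gt0 gram sum_z0.
set z := fun al => \tr (P al *m X); set T := \sum_al z al ^+ 2.
set M := \sum_al z al *: P al.
have trMX : \tr (M *m X) = T.
  rewrite mulmx_suml raddf_sum /=; apply: eq_bigr => al _.
  by rewrite -scalemxAl mxtraceZ expr2.
have trMM : \tr (M *m M) = k * T.
  rewrite mulmx_suml raddf_sum /= /T mulr_sumr; apply: eq_bigr => al _.
  rewrite -scalemxAl mxtraceZ mulmx_sumr raddf_sum /=.
  transitivity (z al * \sum_be (c * z be + (al == be)%:R * (k * z be))).
    by congr (_ * _); apply: eq_bigr => be _; rewrite -scalemxAr mxtraceZ gram; ring.
  by rewrite big_split /= -mulr_sumr sum_z0 mulr0 add0r sum_delta; ring.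
have hM : hermitian_mx M.
  apply: hermitian_mx_sum => al; apply: hermitian_mxZ (hP al).
  exact: mxtrace_mul_hermitian_real.
have k_real : k^-1 \is Num.real by rewrite rpredV gtr0_real.
have := mxtrace_sqr_hermitian_ge0 (hermitian_mxB (hermitian_mxZ k_real hM) hX).
have -> : \tr ((k^-1 *: M - X) *m (k^-1 *: M - X)) = k^-1 * (k * \tr (X *m X) - T).
  rewrite mulmxBl !mulmxBr -!scalemxAr -!scalemxAl scalerA !raddfB /= !mxtraceZ.
  by rewrite [\tr (X *m M)]mxtrace_mulC trMX trMM; field; rewrite gt_eqF.
by rewrite pmulr_rge0 ?invr_gt0 // subr_ge0.
Qed.

Definition sic_overlap n a : algC := (1 - n%:R * a) / (n%:R * (n%:R ^+ 2 - 1)).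

Definition sic_purity_bound n a : algC := (a * n%:R ^+ 2 + 1) / (n%:R * (n%:R + 1)).

Section GeneralSIC.
Variables (n : nat) (a : algC) (P : 'I_(n ^ 2) -> 'M[algC]_n).
Hypotheses (n_ge2 : (2 <= n)%N) (sicP : gen_SIC_POVM a P).

Local Notation N := (n%:R : algC).
Local Notation c := (sic_overlap n a).

Let N_gt0 : 0 < N. Proof. by rewrite ltr0n (leq_trans _ n_ge2). Qed.
Let N_neq0 : N != 0. Proof. exact: lt0r_neq0. Qed.
Let N1_neq0 : N + 1 != 0. Proof. by rewrite natr1 pnatr_eq0. Qed.
Let N2_gt0 : 0 < N ^+ 2 - 1. Proof. by rewrite subr_gt0 exprn_egt1 // ltr1n. Qed.
Let N2_neq0 : N ^+ 2 - 1 != 0. Proof. exact: lt0r_neq0. Qed.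

Lemma sic_hermitian al : hermitian_mx (P al).
Proof. by case: sicP => _ [_ [/(_ al) /psd_hermitian_mx]]. Qed.

Lemma sic_gram al be : \tr (P al *m P be) = c + (al == be)%:R * (a - c).
Proof.
case: sicP => _ [_ [_ [_ [diag off]]]].
have [<- | /off->] := eqVneq al be; last by rewrite mul0r addr0.
by rewrite diag /= mul1r addrC subrK.
Qed.

Lemma sic_gap_gt0 : 0 < a - c.
Proof.
case: sicP => a_gt _.
have -> : a - c = (a * N ^+ 3 - 1) / (N * (N ^+ 2 - 1)).
  by rewrite /sic_overlap; field; rewrite N_neq0 N2_neq0.
rewrite divr_gt0 ?mulr_gt0 // subr_gt0 -ltr_pdivrMr ?exprn_gt0 //.
by rewrite div1r.
Qed.

Lemma sic_trace al : \tr (P al) = N^-1.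
Proof.
case: sicP => _ [_ [_ [P_sum _]]].
have : \tr (P al *m \sum_be P be) = \tr (P al) by rewrite P_sum mulmx1.
rewrite mulmx_sumr raddf_sum /=; under eq_bigr do rewrite sic_gram.
rewrite big_split /= sum_delta sumr_const card_ord -[c *+ _]mulr_natr natrX => <-.
by rewrite /sic_overlap; field; rewrite N_neq0 N2_neq0.
Qed.

Lemma sic_sum_sqr_le A : density A ->
  \sum_al \tr (P al *m A) ^+ 2 <= sic_purity_bound n a.
Proof.
move=> A_dens; have [A_psd trA] := A_dens.
have P_sum : \sum_al P al = 1%:M by case: sicP => _ [_ [_ []]].
set X := A - N^-1%:M.
have hX : hermitian_mx X.
  apply: hermitian_mxB (psd_hermitian_mx A_psd) (hermitian_mx_scalar _).
  by rewrite rpredV realn.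
have trPA al : \tr (P al *m A) = \tr (P al *m X) + N^-1 * N^-1.
  by rewrite mulmxBr mul_mx_scalar raddfB /= mxtraceZ sic_trace subrK.
have sumX0 : \sum_al \tr (P al *m X) = 0.
  rewrite -raddf_sum -mulmx_suml P_sum mul1mx raddfB /= trA mxtrace_scalar.
  by rewrite -[N^-1 *+ n]mulr_natr mulVf ?subrr.
have trXX : \tr (X *m X) = \tr (A *m A) - N^-1.
  rewrite mulmxBl !mulmxBr mul_mx_scalar mul_scalar_mx -scalar_mxM !raddfB /=.
  by rewrite !mxtraceZ !mxtrace_scalar trA -[N^-1 * N^-1 *+ n]mulr_natr; field.
have bessel := equiangular_bessel sic_hermitian hX sic_gap_gt0 sic_gram sumX0.
have -> : \sum_al \tr (P al *m A) ^+ 2 = \sum_al \tr (P al *m X) ^+ 2 + N^-1 * N^-1.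
  under eq_bigr do rewrite trPA sqrrD.
  rewrite !big_split /= -mulr_suml sumX0 mul0r !addr0 sumr_const card_ord.
  by rewrite -[_ *+ (n ^ 2)]mulr_natr natrX; field.
have -> : sic_purity_bound n a = (a - c) * (1 - N^-1) + N^-1 * N^-1.
  by rewrite /sic_purity_bound /sic_overlap; field; rewrite N_neq0 N1_neq0 N2_neq0.
rewrite lerD2r (le_trans bessel) // trXX ler_wpM2l ?(ltW sic_gap_gt0) //.
by rewrite lerD2r density_purity_le1.
Qed.

Lemma sic_purity_bound_gt0 : 0 < sic_purity_bound n a.
Proof.
case: sicP => a_gt _.
have a_gt0 : 0 < a by apply: lt_trans a_gt; rewrite invr_gt0 exprn_gt0.
apply: divr_gt0; first exact: addr_gt0 (mulr_gt0 a_gt0 (exprn_gt0 _ N_gt0)) ltr01.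
exact: mulr_gt0 N_gt0 (addr_gt0 N_gt0 ltr01).
Qed.

End GeneralSIC.

Lemma sic_product_state_bound d1 d2 a1 a2 (P : 'I_(d1 ^ 2) -> 'M[algC]_d1)
    (Q : 'I_(d2 ^ 2) -> 'M[algC]_d2) (J : finType) (sigma : J -> 'I_(d1 ^ 2))
    (tau : J -> 'I_(d2 ^ 2)) (A : 'M[algC]_d1) (B : 'M[algC]_d2) :
  (2 <= d1)%N -> (2 <= d2)%N -> gen_SIC_POVM a1 P -> gen_SIC_POVM a2 Q ->
  injective sigma -> injective tau -> density A -> density B ->
  \sum_j \tr (P (sigma j) *m A) * \tr (Q (tau j) *m B)
    <= sqrtC (sic_purity_bound d1 a1) * sqrtC (sic_purity_bound d2 a2).
Proof.
move=> d1_ge2 d2_ge2 sicP sicQ sigma_inj tau_inj A_dens B_dens.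
have [[A_psd _] [B_psd _]] := (A_dens, B_dens).
have PA_real al : \tr (P al *m A) \is Num.real.
  exact: mxtrace_mul_hermitian_real (sic_hermitian sicP al)
                                    (psd_hermitian_mx A_psd).
have QB_real al : \tr (Q al *m B) \is Num.real.
  exact: mxtrace_mul_hermitian_real (sic_hermitian sicQ al)
                                    (psd_hermitian_mx B_psd).
apply: sum_mul_le_sqrtC => //.
- exact: sic_purity_bound_gt0 d1_ge2 sicP.
- exact: sic_purity_bound_gt0 d2_ge2 sicQ.
- apply: le_trans (sic_sum_sqr_le d1_ge2 sicP A_dens).
  apply: (ler_sum_inj (F := fun al => \tr (P al *m A) ^+ 2) sigma_inj) => al.
  by rewrite -realEsqr.
- apply: le_trans (sic_sum_sqr_le d2_ge2 sicQ B_dens).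
  apply: (ler_sum_inj (F := fun al => \tr (Q al *m B) ^+ 2) tau_inj) => al.
  by rewrite -realEsqr.
Qed.

Theorem theorem2 (d1 d2 : nat) (h1 : (2 <= d1)%N) (h2 : (2 <= d2)%N)
  (rho : 'M[algC]_(d1 * d2)) (hrho : density rho)
  (a1 a2 : algC) (P : 'I_(d1 ^ 2) -> 'M[algC]_d1) (Q : 'I_(d2 ^ 2) -> 'M[algC]_d2)
  (hP : gen_SIC_POVM a1 P) (hQ : gen_SIC_POVM a2 Q) :
  separable rho ->
  forall (sigma : 'I_(minn (d1 ^ 2) (d2 ^ 2)) -> 'I_(d1 ^ 2))
         (tau : 'I_(minn (d1 ^ 2) (d2 ^ 2)) -> 'I_(d2 ^ 2)),
    injective sigma -> injective tau ->
    \sum_(j < minn (d1 ^ 2) (d2 ^ 2)) \tr (kron (P (sigma j)) (Q (tau j)) *m rho)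
      <= sqrtC ((a1 * d1%:R ^+ 2 + 1) / (d1%:R * (d1%:R + 1)))
         * sqrtC ((a2 * d2%:R ^+ 2 + 1) / (d2%:R * (d2%:R + 1))).
Proof.
move=> [N [p [A [B [p_ge0 [p_sum [A_dens [B_dens ->]]]]]]]] sigma tau sigma_inj tau_inj.
set bound := sqrtC _ * sqrtC _.
under eq_bigr do rewrite mulmx_sumr raddf_sum /=.
rewrite exchange_big /= -[bound]mul1r -p_sum mulr_suml; apply: ler_sum => i _.
under eq_bigr do rewrite -scalemxAr mxtraceZ kron_mulmx mxtrace_kron.
rewrite -mulr_sumr ler_wpM2l //.
exact: sic_product_state_bound.
Qed.
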